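(* Let $T:\mathcal P(\mathbb R^n)\to\mathcal P(\mathbb R^n)$ be $TA=\{y:\langle x,y\rangle\ge 1\ \forall x\in A\}$, let $\mathcal C=\{TK:K\subseteq\mathbb R^n\}$, and let $\mathcal S$ be the set of $K\in\mathcal C\setminus\{\emptyset,\mathbb R^n\}$ whose (unique) point closest to the origin is $e_n$. Identify $\mathbb R^n=\mathbb R^{n-1}\times\mathbb R$. For $K\in\mathcal S$ let $\varphi:\mathbb R^{n-1}\to(0,\infty]$ be $\varphi(x)=\min\{t:(x,t)\in K\}$ (with $\varphi(x)=+\infty$ if no such $t$ exists), and define \[ \tilde T\varphi(y)=\sup_{x\in\mathbb R^{n-1},\ \varphi(x)<\infty}\frac{1-\langle x,y\rangle}{\varphi(x)},\qquad y\in\mathbb R^{n-1}. \] Then $\mathrm{epi}(\varphi)=K$ and $TK=\mathrm{epi}(\tilde T\varphi)$. Moreover, the map $K\mapsto\varphi$ is a bijection between $\mathcal S$ and the class of lower semi-continuous convex functions $\varphi$ on $\mathbb R^{n-1}$ whose minimal value is $\varphi(0)=1$ and which satisfy $-1\le\mathcal L\varphi(y)\le 0$ for all $y\in\mathrm{dom}(\mathcal L\varphi)$.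
   Context: $e_n=(0,\dots,0,1)$. For $\varphi:\mathbb R^{n-1}\to(-\infty,\infty]$, $\mathrm{epi}(\varphi)=\{(x,t)\in\mathbb R^{n-1}\times\mathbb R: t\ge\varphi(x)\}$. $\mathcal L\varphi(y)=\sup_{x}(\langle x,y\rangle-\varphi(x))$ is the Legendre transform and $\mathrm{dom}(\mathcal L\varphi)=\{y:\mathcal L\varphi(y)<\infty\}$. *)

From HB Require Import structures.
From mathcomp Require Import all_boot all_order all_algebra.
From mathcomp Require Import all_classical all_reals all_analysis.
Set Implicit Arguments. Unset Strict Implicit. Unset Printing Implicit Defensive.
Import Order.TTheory GRing.Theory Num.Theory.
Import numFieldNormedType.Exports.
Local Open Scope classical_set_scope.
Local Open Scope ring_scope.

(* R^n is identified with R^(n-1) x R, i.e. with 'rV[R]_m * R where n = m+1. *)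
Definition pt (R : realType) (m : nat) := ('rV[R]_m * R)%type.

Definition dotv (R : realType) (m : nat) (x y : 'rV[R]_m) : R :=
  \sum_(i < m) x 0 i * y 0 i.

Definition ip (R : realType) (m : nat) (p q : pt R m) : R :=
  dotv p.1 q.1 + p.2 * q.2.

Definition e_n (R : realType) (m : nat) : pt R m := (0, 1).

Definition Tpol (R : realType) (m : nat) (A : set (pt R m)) : set (pt R m) :=
  [set y | forall x, A x -> 1 <= ip x y].

Definition inC (R : realType) (m : nat) (K : set (pt R m)) : Prop :=
  exists L : set (pt R m), K = Tpol L.

Definition inS (R : realType) (m : nat) (K : set (pt R m)) : Prop :=
  [/\ inC K, K <> set0, K <> setT, K (e_n R m) &
      forall p, K p -> p <> e_n R m ->
        Num.sqrt (ip (e_n R m) (e_n R m)) < Num.sqrt (ip p p)].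

Definition phiK (R : realType) (m : nat) (K : set (pt R m)) (x : 'rV[R]_m)
  : \bar R := ereal_inf [set t%:E | t in [set t | K (x, t)]].

Definition epi (R : realType) (m : nat) (phi : 'rV[R]_m -> \bar R)
  : set (pt R m) := [set p | (phi p.1 <= p.2%:E)%E].

Definition Ttilde (R : realType) (m : nat) (phi : 'rV[R]_m -> \bar R)
  (y : 'rV[R]_m) : \bar R :=
  ereal_sup [set ((1 - dotv x y) / fine (phi x))%:E
            | x in [set x | (phi x < +oo)%E]].

Definition legendre (R : realType) (m : nat) (phi : 'rV[R]_m -> \bar R)
  (y : 'rV[R]_m) : \bar R :=
  ereal_sup [set ((dotv x y)%:E - phi x)%E | x in [set: 'rV[R]_m]].

Definition dom_legendre (R : realType) (m : nat) (phi : 'rV[R]_m -> \bar R)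
  : set 'rV[R]_m := [set y | (legendre phi y < +oo)%E].

Definition econvex (R : realType) (m : nat) (phi : 'rV[R]_m -> \bar R) : Prop :=
  forall (x y : 'rV[R]_m) (l : R), 0 < l < 1 ->
    (phi (l *: x + (1 - l) *: y)%R <= l%:E * phi x + (1 - l)%:E * phi y)%E.

Definition inF (R : realType) (m : nat) (phi : 'rV[R]_m -> \bar R) : Prop :=
  [/\ lower_semicontinuous phi, econvex phi,
      phi 0 = 1%E, (forall x, (1 <= phi x)%E) &
      forall y, dom_legendre phi y ->
        ((-1)%:E <= legendre phi y /\ legendre phi y <= 0)%E].

(* For K = T L containing e_n, every constraint w of L has w.2 >= 1, so K is
   convex, closed upwards in t and stable under the dilations by k >= 1; its
   vertical fibres are therefore closed half-lines [phi x, +oo), which gives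
   epi phi = K, the convexity and lower semicontinuity of phi and, by dilation,
   L phi <= 0 on its domain; T K = epi (Ttilde phi) is the constraint
   <x, y> + phi(x) s >= 1 read fibre by fibre.  That e_n is the point of K closest to the origin
   forces K into {t >= 1}, whence phi >= 1 = phi 0.  For the converse, a point
   (y, s) below the graph of phi is cut off by an affine minorant of phi built
   from the proximal point of y; the bounds -1 <= L phi <= 0 turn this minorant
   into a constraint <w, .> >= 1 valid on epi phi, so epi phi = T (T (epi phi)). *)
From HB Require Import structures.
From mathcomp Require Import all_boot all_order all_algebra.
From mathcomp Require Import all_classical all_reals all_analysis.
From mathcomp Require Import ring lra.
Import Order.TTheory GRing.Theory Num.Theory.
Import numFieldNormedType.Exports.
Local Open Scope classical_set_scope.
Local Open Scope ring_scope.

Section dotv.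
Context {R : realType} {m : nat}.
Implicit Types (x y z : 'rV[R]_m) (a : R).

Lemma dotvC x y : dotv x y = dotv y x.
Proof. by apply: eq_bigr => i _; rewrite mulrC. Qed.

Lemma dotvDl x y z : dotv (x + y) z = dotv x z + dotv y z.
Proof. by rewrite /dotv -big_split; apply: eq_bigr => i _; rewrite mxE mulrDl. Qed.

Lemma dotvZl a x y : dotv (a *: x) y = a * dotv x y.
Proof. by rewrite /dotv mulr_sumr; apply: eq_bigr => i _; rewrite mxE mulrA. Qed.

Lemma dotvNl x y : dotv (- x) y = - dotv x y.
Proof. by rewrite -scaleN1r dotvZl mulN1r. Qed.

Lemma dotvBl x y z : dotv (x - y) z = dotv x z - dotv y z.
Proof. by rewrite dotvDl dotvNl. Qed.

Lemma dotv0l y : dotv 0 y = 0.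
Proof. by rewrite -(scale0r 0) dotvZl mul0r. Qed.

Lemma dotvDr x y z : dotv x (y + z) = dotv x y + dotv x z.
Proof. by rewrite !(dotvC x) dotvDl. Qed.

Lemma dotvZr a x y : dotv x (a *: y) = a * dotv x y.
Proof. by rewrite !(dotvC x) dotvZl. Qed.

Lemma dotvNr x y : dotv x (- y) = - dotv x y.
Proof. by rewrite !(dotvC x) dotvNl. Qed.

Lemma dotv_sqrD x y : dotv (x + y) (x + y) = dotv x x + 2 * dotv x y + dotv y y.
Proof. by rewrite dotvDl !dotvDr (dotvC y x); ring. Qed.

Lemma dotv_ge0 x : 0 <= dotv x x.
Proof. by apply: sumr_ge0 => i _; rewrite -expr2 sqr_ge0. Qed.

Lemma sqr_coord_le_dotv x i : x 0 i ^+ 2 <= dotv x x.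
Proof.
rewrite /dotv (bigD1 i) //= -expr2 lerDl.
by apply: sumr_ge0 => j _; rewrite -expr2 sqr_ge0.
Qed.

Lemma dotv_eq0 x : (dotv x x == 0) = (x == 0).
Proof.
apply/eqP/eqP => [x0|->]; last exact: dotv0l.
apply/rowP => i; rewrite mxE; apply/eqP; rewrite -sqrf_eq0 eq_le sqr_ge0 andbT.
by rewrite -x0 sqr_coord_le_dotv.
Qed.

Lemma continuous_dotv (T : topologicalType) (f g : T -> 'rV[R]_m) :
  continuous f -> continuous g -> continuous (fun t => dotv (f t) (g t)).
Proof.
move=> cf cg t; apply: cvg_big => [|i _]; first exact: add_continuous.
by apply: cvgM; [exact: (continuous_comp (cf t) (@coord_continuous R 1 m 0 i (f t)))
                | exact: (continuous_comp (cg t) (@coord_continuous R 1 m 0 i (g t)))].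
Qed.

Definition sqdist y x := dotv (x - y) (x - y).

Lemma continuous_sqdist y : continuous (sqdist y).
Proof.
have cB : continuous (fun x : 'rV[R]_m => x - y).
  by move=> x; apply: continuousB => //; exact: cst_continuous.
by move=> x; exact: continuous_dotv.
Qed.

Lemma ipC (p q : pt R m) : ip p q = ip q p.
Proof. by rewrite /ip dotvC mulrC. Qed.

Lemma ip_e_n (p : pt R m) : ip (e_n R m) p = p.2.
Proof. by rewrite /ip dotv0l mul1r add0r. Qed.

Lemma ltr_sqrt_ip_e_n (p : pt R m) :
  (Num.sqrt (ip (e_n R m) (e_n R m)) < Num.sqrt (ip p p)) = (1 < ip p p).
Proof. by rewrite ip_e_n !ltNge ler_sqrt. Qed.

End dotv.

Section polar.
Context {R : realType} {m : nat} {L : set (pt R m)}.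
Local Notation K := (Tpol L).
Implicit Types (x : 'rV[R]_m) (t : R).

Lemma Tpol_convex {x1 t1 x2 t2 l} : K (x1, t1) -> K (x2, t2) -> 0 <= l <= 1 ->
  K (l *: x1 + (1 - l) *: x2, l * t1 + (1 - l) * t2).
Proof.
move=> K1 K2 /andP[l0 l1] w Lw; move: (K1 w Lw) (K2 w Lw).
rewrite /ip /= dotvDr !dotvZr; nra.
Qed.

Lemma Tpol_scale {x t k} : K (x, t) -> 1 <= k -> K (k *: x, k * t).
Proof. by move=> Kx k1 w Lw; move: (Kx w Lw); rewrite /ip /= dotvZr; nra. Qed.

Lemma Tpol_e_n_snd_ge1 {w} : K (e_n R m) -> L w -> 1 <= w.2.
Proof. by move=> Ke Lw; rewrite -(ip_e_n w) ipC; exact: Ke. Qed.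

Lemma Tpol_up x t t' : K (e_n R m) -> K (x, t) -> t <= t' -> K (x, t').
Proof.
move=> Ke Kx tt' w Lw; move: (Kx w Lw) (Tpol_e_n_snd_ge1 Ke Lw).
rewrite /ip /=; nra.
Qed.

(* Moving from e_n towards a point of K with height < 1 first gets closer to the origin. *)
Lemma Tpol_snd_ge1 x t : K (e_n R m) ->
  (forall p, K p -> p <> e_n R m -> 1 < ip p p) -> K (x, t) -> 1 <= t.
Proof.
move=> Ke closest Kx; rewrite leNgt; apply/negP => t1.
pose d := 1 - t; pose D := dotv x x + d ^+ 2; pose l := d / (D + d).
have d0 : 0 < d by rewrite /d subr_gt0.
have D0 : 0 < D by rewrite /D ltr_wpDl ?dotv_ge0 ?exprn_gt0.
have Dd : 0 < D + d by rewrite addr_gt0.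
have l0 : 0 < l by rewrite /l divr_gt0.
have ld : l * (D + d) = d by rewrite /l divfK // gt_eqF.
have l1 : l <= 1 by rewrite /l ler_pdivrMr // mul1r lerDr ltW.
have l01 : 0 <= l <= 1 by rewrite l1 ltW.
have := Tpol_convex Kx Ke l01; rewrite scaler0 addr0 mulr1; set q := (_, _) => Kq.
have ipq : ip q q = 1 - l * (2 * d - l * D).
  by rewrite /ip /= dotvZl dotvZr /D /d; ring.
have ipq1 : ip q q < 1.
  by rewrite ipq ltrBlDr ltrDl mulr_gt0 // subr_gt0; nra.
have /(closest _ Kq) : q <> e_n R m by move=> qe; move: ipq1; rewrite qe ip_e_n ltxx.
by move=> /(lt_trans ipq1); rewrite ltxx.
Qed.

End polar.

Section phiK_of_polar.
Context {R : realType} {m : nat} {L : set (pt R m)}.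
Local Notation K := (Tpol L).
Hypothesis K_e_n : K (e_n R m).
Hypothesis K_snd_ge1 : forall x t, K (x, t) -> 1 <= t.
Local Notation phi := (phiK K).
Implicit Types (x y : 'rV[R]_m) (t s : R).

Variant phiK_spec x : \bar R -> Prop :=
  | PhiKInfty of (forall t, ~ K (x, t)) : phiK_spec x +oo
  | PhiKFin t0 of 1 <= t0 & (forall t, K (x, t) <-> t0 <= t) : phiK_spec x t0%:E.

(* Since w.2 >= 1, each constraint w of L is a lower bound on t along the fibre
   over x, so the infimum of the fibre still satisfies all of them. *)
Lemma phiKP x : phiK_spec x (phi x).
Proof.
have [[t1 Kt1]|none] := pselect (exists t, K (x, t)); last first.
  rewrite /phiK (_ : [set _%:E | _ in _] = set0) ?ereal_inf0.
    by constructor => t Kt; apply: none; exists t.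
  by apply/seteqP; split => // y [t Kt _]; apply: none; exists t.
have ub : (phi x <= t1%:E)%E by apply: ereal_inf_lbound; exists t1.
have lb1 : (1%:E <= phi x)%E.
  by apply: le_ereal_inf_tmp => _ [t Kt <-]; rewrite lee_fin; exact: K_snd_ge1 Kt.
have lbw w : L w -> (((1 - dotv w.1 x) / w.2)%:E <= phi x)%E.
  move=> Lw; apply: le_ereal_inf_tmp => _ [t Kt <-]; rewrite lee_fin.
  have w2 := Tpol_e_n_snd_ge1 K_e_n Lw.
  by rewrite ler_pdivrMr ?(lt_le_trans ltr01) //; move: (Kt w Lw); rewrite /ip /=; lra.
case E: (phi x) ub lb1 lbw => [t0| |] //= _; rewrite lee_fin => t01 lbw.
have Kt0 : K (x, t0).
  move=> w Lw; move: (lbw w Lw); have w2 := Tpol_e_n_snd_ge1 K_e_n Lw.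
  by rewrite lee_fin ler_pdivrMr ?(lt_le_trans ltr01) // /ip /=; lra.
constructor => // t; split => [Kt|]; last exact: Tpol_up.
by rewrite -lee_fin -E; apply: ereal_inf_lbound; exists t.
Qed.

Lemma phiK_ge1 x : (1 <= phi x)%E.
Proof. by case: phiKP => [_|t0 t01 _]; rewrite ?leey ?lee_fin. Qed.

Lemma phiK_gt0 x : (0 < phi x)%E.
Proof. exact: lt_le_trans (phiK_ge1 x). Qed.

Lemma phiK0 : phi 0 = 1%E.
Proof.
case: phiKP => [/(_ 1)//|t0 t01 Kt0]; congr (_%:E); apply/eqP.
by rewrite eq_le t01 andbT; apply/Kt0.
Qed.

Lemma epi_phiK : epi phi = K.
Proof.
rewrite predeqE => -[x t]; rewrite /epi /=.
by case: phiKP => [none|t0 _ Kt0]; rewrite ?lee_fin ?Kt0; split => // /none.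
Qed.

Lemma Tpol_phiK : Tpol K = epi (Ttilde phi).
Proof.
rewrite predeqE => -[y s]; rewrite /epi /=; split => [Ty | Ts].
  apply: ge_ereal_sup => _ [x /= + <-].
  case: phiKP => [//|t0 t01 Kt0 _ /=].
  have := Ty _ ((Kt0 t0).2 (lexx _)); rewrite /ip /= lee_fin ler_pdivrMr //.
    by lra.
  exact: lt_le_trans t01.
have Ts_le x : (phi x < +oo)%E -> (((1 - dotv x y) / fine (phi x))%:E <= s%:E)%E.
  by move=> fin; apply: le_trans Ts; apply: ereal_sup_ubound; exists x.
have s1 : 1 <= s.
  by have := Ts_le 0; rewrite phiK0 /= dotv0l subr0 divr1 lee_fin; apply; exact: ltry.
move=> [x t] /=; rewrite /ip /=; move: (Ts_le x).
case: phiKP => [none _ /none//|t0 t01 Kt0 /(_ (ltry _))].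
rewrite lee_fin ler_pdivrMr ?(lt_le_trans ltr01) // /= => h /Kt0 tt0; nra.
Qed.

Lemma phiK_convex : econvex phi.
Proof.
move=> x y l /andP[l0 l1].
have l1' : 0 < 1 - l by rewrite subr_gt0.
case: (phiKP x) => [_|tx _ Kx].
  rewrite mulry gtr0_sg // mul1e addye ?leey // gt_eqF //.
  by apply: lt_le_trans (mule_ge0 _ (ltW (phiK_gt0 y))); rewrite ?ltNyr ?lee_fin ?ltW.
case: (phiKP y) => [_|ty _ Ky].
  by rewrite mulry gtr0_sg // mul1e addey ?leey // gt_eqF // -EFinM ltNyr.
have l01 : 0 <= l <= 1 by rewrite !ltW.
have := Tpol_convex ((Kx tx).2 (lexx _)) ((Ky ty).2 (lexx _)) l01.
by rewrite -!EFinM -EFinD; case: phiKP => [none /none//|t0 _ Kt0 /Kt0]; rewrite lee_fin.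
Qed.

Lemma phiK_lsc : lower_semicontinuous phi.
Proof.
move=> x0 a ltax0.
have nK : ~ K (x0, a).
  by move: ltax0; case: phiKP => [none _ /none//|t0 _ Kt0]; rewrite lte_fin Kt0 ltNge => /negP.
have [w [Lw ltw]] : exists w, L w /\ ip w (x0, a) < 1.
  apply: contra_notP nK => nw w Lw; rewrite leNgt; apply/negP => lt.
  by apply: nw; exists w.
exists [set x | dotv w.1 x < 1 - w.2 * a].
  apply: open_nbhs_nbhs; split; last by rewrite /= ltrBrDr.
  apply: (@open_comp _ _ (dotv w.1) [set r | r < 1 - w.2 * a]); last exact: open_lt.
  by move=> x _; apply: continuous_dotv; [exact: cst_continuous | move=> ?].
move=> x /=; rewrite ltrBrDr => ltx; case: phiKP => [_|t0 _ Kt0]; first exact: ltry.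
by rewrite lte_fin ltNge; apply/negP => /Kt0 /(_ w Lw); rewrite leNgt ltx.
Qed.

(* K is invariant under dilations by k >= 1, so a point above the hyperplane
   t = <x,y> would make the Legendre transform unbounded. *)
Lemma legendre_phiK_bounds y : dom_legendre phi y ->
  ((-1)%:E <= legendre phi y /\ legendre phi y <= 0)%E.
Proof.
rewrite /dom_legendre /= => Ly_fin.
have lo : ((-1)%:E <= legendre phi y)%E.
  apply: le_trans (ereal_sup_ubound _); last by exists 0.
  by rewrite phiK0 dotv0l add0e.
split => //; case E: (legendre phi y) lo Ly_fin => [M| |] // _ _.
have Lub x : ((dotv x y)%:E - phi x <= M%:E)%E.
  by rewrite -E; apply: ereal_sup_ubound; exists x.
have below x : ((dotv x y)%:E <= phi x)%E.
  case: (phiKP x) => [_|t0 _ Kx]; first exact: leey.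
  rewrite lee_fin leNgt; apply/negP => lt.
  pose k := 1 + (`|M| + 1) / (dotv x y - t0).
  have d0 : 0 < dotv x y - t0 by rewrite subr_gt0.
  have k1 : 1 <= k by rewrite lerDl divr_ge0 // ltW.
  have kd : M < k * (dotv x y - t0).
    by rewrite mulrDl mul1r divfK ?gt_eqF //; have := ler_norm M; lra.
  have := Lub (k *: x); have := Tpol_scale ((Kx t0).2 (lexx _)) k1.
  case: phiKP => [none /none//|t1 _ Kt1 /Kt1 le1].
  by rewrite -EFinB lee_fin dotvZl; nra.
rewrite -E; apply: ge_ereal_sup => _ [x _ <-]; have := below x.
case: phiKP => [_ _|t0 _ _]; first by rewrite addeNy leNye.
by rewrite -EFinB !lee_fin subr_le0.
Qed.

End phiK_of_polar.

Section lower_semicontinuous.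
Context {X : topologicalType} {R : realType}.
Implicit Types (f F : X -> \bar R) (g : X -> R).

Lemma lsc_addr_continuous f g : lower_semicontinuous f -> continuous g ->
  lower_semicontinuous (fun x => f x + (g x)%:E)%E.
Proof.
move=> lsc_f cont_g x a /= lt_a.
have [b ltbf ltab] : exists2 b : R, (b%:E < f x)%E & a < b + g x.
  move: lt_a; case: (f x) => [r| |] //=.
    by rewrite -EFinD lte_fin => lt; exists ((r + a - g x) / 2); rewrite ?lte_fin; lra.
  by move=> _; exists (a - g x + 1); [exact: ltry | lra].
have [V nV ltV] := lsc_f x b ltbf.
have nW : \forall y \near x, a - b < g y by apply: cvgr_gt (cont_g x) _ _; rewrite ltrBlDl.
exists (V `&` [set y | a - b < g y]); first exact: filterI.
move=> y [Vy ltgy]; rewrite -(subrKC b a) EFinD.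
by apply: lteD => //; exact: ltV.
Qed.

(* The sublevel sets {x in B | F x < inf_B F + e} have the finite intersection
   property; a cluster point of them is a minimiser by lower semicontinuity. *)
Lemma lsc_compact_attains_min {F} {B : set X} {x1} {r : R} :
  compact B -> B x1 -> lower_semicontinuous F -> (forall x, B x -> r%:E <= F x)%E ->
  exists2 x0, B x0 & forall x, B x -> (F x0 <= F x)%E.
Proof.
move=> cptB Bx1 lscF lbF; pose mu := ereal_inf (F @` B).
have mu_lb x : B x -> (mu <= F x)%E by move=> Bx; apply: ereal_inf_lbound; exists x.
suff [x0 Bx0 le_mu] : exists2 x0, B x0 & (F x0 <= mu)%E.
  by exists x0 => // x /mu_lb; exact: le_trans.
have : (r%:E <= mu)%E by apply: le_ereal_inf_tmp => _ [x Bx <-]; exact: lbF.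
case E: mu => [m0| |] // _; last by exists x1; rewrite ?leey.
pose G := filter_from [set e : R | 0 < e]
  (fun e => [set x | B x /\ (F x < (m0 + e)%:E)%E]).
have GF : ProperFilter G.
  apply: filter_from_proper; last first.
    move=> e e0; have : (mu < (m0 + e)%:E)%E by rewrite E lte_fin ltrDl.
    by move/ereal_inf_lt => [_ [x Bx <-] Fx]; exists x.
  apply: filter_from_filter; first by exists 1; rewrite /= ltr01.
  move=> i j i0 j0; exists (Order.min i j); first by rewrite /= lt_min i0 j0.
  move=> x [Bx Fx]; split; split => //; apply: (lt_le_trans Fx);
    by rewrite lee_fin lerD2l ge_min lexx ?orbT.
have GB : G B by exists 1 => [|x []//]; rewrite /= ltr01.
have [x0 [Bx0 cl]] := cptB G GF GB.
exists x0 => //; rewrite leNgt; apply/negP => lt.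
have [a lt_m0a lt_aF] : exists2 a, m0 < a & (a%:E < F x0)%E.
  case: (F x0) lt => [f| |] //= lt.
    by exists ((m0 + f) / 2); move: lt; rewrite !lte_fin; lra.
  by exists (m0 + 1); [lra | exact: ltry].
have [V nV ltV] := lscF x0 a lt_aF.
have Ga : G [set x | B x /\ (F x < (m0 + (a - m0))%:E)%E].
  by exists (a - m0) => //=; rewrite subr_gt0.
have [z [[_ ltz] Vz]] := cl _ _ Ga nV.
by move: (ltV _ Vz) ltz; rewrite subrKC => /lt_trans/[apply]; rewrite ltxx.
Qed.

End lower_semicontinuous.

Lemma ler_limit_addtM (R : realFieldType) (A B D : R) : 0 <= D ->
  (forall t, 0 < t < 1 -> A <= B + t * D) -> A <= B.
Proof.
move=> D0 le_t; rewrite leNgt; apply/negP => ltBA.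
pose t := (A - B) / (2 * (A - B + D)).
have uD : 0 < 2 * (A - B + D) by rewrite mulr_gt0 // ltr_wpDr // subr_gt0.
have tu : t * (2 * (A - B + D)) = A - B by rewrite divfK // gt_eqF.
have t0 : 0 < t by rewrite divr_gt0 // subr_gt0.
have := le_t t; rewrite t0 /= ltr_pdivrMr // mul1r; nra.
Qed.

Lemma nbhs_rV_coord {R : realType} {m : nat} {y : 'rV[R]_m} {V : set 'rV[R]_m} :
  nbhs y V -> exists2 e : R, 0 < e &
    forall x : 'rV[R]_m, (forall i, `|x 0 i - y 0 i| < e) -> V x.
Proof.
move=> /nbhs_ballP [e e0 yeV]; exists e => // x near_x; apply: yeV.
by split => // i j; rewrite (ord1 i) /ball /= distrC; exact: near_x.
Qed.

Section affine_minorant.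
Context {R : realType} {m : nat} {phi : 'rV[R]_m -> \bar R}.
Hypothesis phi_lsc : lower_semicontinuous phi.
Hypothesis phi_convex : econvex phi.
Context {x1 : 'rV[R]_m} {r1 : R}.
Hypothesis phi_x1 : phi x1 = r1%:E.
Hypothesis phi_ge : forall x, (r1%:E <= phi x)%E.
Implicit Types (x y z : 'rV[R]_m) (c s : R).

Local Notation penalized y c := (fun x => phi x + (c * sqdist y x)%:E)%E.

(* First-order optimality of x0 for phi + c |. - y|^2, along the segment [x0, x]. *)
Lemma penalized_min_subgradient {y c x0 f0} : 0 <= c -> phi x0 = f0%:E ->
  (forall x, penalized y c x0 <= penalized y c x)%E ->
  forall x, ((f0 + 2 * c * dotv (x - x0) (y - x0))%:E <= phi x)%E.
Proof.
move=> c0 phix0 x0_min x.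
case E: (phi x) (phi_ge x) => [g| |] // _; last exact: leey.
rewrite lee_fin; apply: (@ler_limit_addtM _ _ _ (c * dotv (x - x0) (x - x0))).
  by rewrite mulr_ge0 ?dotv_ge0.
move=> t t01; pose xt := t *: x + (1 - t) *: x0.
have := x0_min xt; have := phi_convex x x0 t t01; rewrite -/xt E phix0.
case: (phi xt) (phi_ge xt) => [h _| |] //.
have -> : sqdist y xt = dotv (x0 - y + t *: (x - x0)) (x0 - y + t *: (x - x0)).
  by congr dotv; apply/rowP => i; rewrite !mxE; ring.
have flip : dotv (x0 - y) (x - x0) = - dotv (x - x0) (y - x0).
  by rewrite dotvC -dotvNr opprB.
rewrite dotv_sqrD dotvZl !dotvZr flip -/(sqdist y x0) -!EFinM -!EFinD !lee_fin.
move: t01 => /andP[t0 t1] hc hF.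
have : t * (f0 + 2 * c * dotv (x - x0) (y - x0) - (g + t * (c * dotv (x - x0) (x - x0)))) <= 0.
  by nra.
by rewrite pmulr_rle0 // subr_le0.
Qed.

Lemma penalized_ge {y s e c} : 0 < e -> 0 <= c -> s - r1 <= c * e ^+ 2 ->
  (forall x, (forall i, `|x 0 i - y 0 i| < e) -> (s%:E < phi x)%E) ->
  forall x, (s%:E <= penalized y c x)%E.
Proof.
move=> e0 c0 le_sc gt_near x.
have [near_x|] := pselect (forall i, `|x 0 i - y 0 i| < e).
  by apply: le_trans (ltW (gt_near _ near_x)) _; rewrite leeDl // lee_fin mulr_ge0 ?dotv_ge0.
move=> /existsNP[i /negP]; rewrite -leNgt => far.
have : e ^+ 2 <= sqdist y x.
  rewrite /sqdist; apply: le_trans (sqr_coord_le_dotv (x - y) i); rewrite !mxE.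
  by rewrite -(real_normK (num_real (x 0 i - y 0 i))) !expr2 ler_pM // ltW.
move=> /(ler_wpM2l c0) le_e; apply: le_trans (leeD2r _ (phi_ge x)).
by rewrite -EFinD lee_fin; lra.
Qed.

(* Outside a large box around y the penalty alone exceeds the value at x1. *)
Lemma penalized_attains_min y c : 0 <= c ->
  exists x0, forall x, (penalized y c x0 <= penalized y c x)%E.
Proof.
move=> c0; pose M := sqdist y x1 + 1.
pose B := [set v : 'rV[R]_m | forall i, `[y 0 i - M, y 0 i + M]%classic (v ord0 i)].
have B_dist v : B v <-> forall i, `|v 0 i - y 0 i| <= M.
  by split => Bv i; move: (Bv i); rewrite /= in_itv /= ler_distl.
have cptB : compact B.
  apply: (@rV_compact _ _ (fun i => `[y 0 i - M, y 0 i + M]%classic)) => i.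
  exact: segment_compact.
have le_sq (v : 'rV[R]_m) i : `|v 0 i - y 0 i| ^+ 2 <= sqdist y v.
  by rewrite real_normK ?num_real //; have := sqr_coord_le_dotv (v - y) i; rewrite !mxE.
have Bx1 : B x1.
  apply/B_dist => i; have := le_sq x1 i; have := sqr_ge0 (`|x1 0 i - y 0 i| - 1).
  by rewrite /M; nra.
have F_ge x : (r1%:E <= penalized y c x)%E.
  by apply: le_trans (leeDl _ _) (leeD2r _ (phi_ge x)); rewrite lee_fin mulr_ge0 ?dotv_ge0.
have lscF : lower_semicontinuous (penalized y c).
  apply: lsc_addr_continuous => // x.
  by apply: (@continuousM _ _ (cst c)); [exact: cst_continuous | exact: continuous_sqdist].
have [x0 Bx0 x0_min] := lsc_compact_attains_min cptB Bx1 lscF (fun x _ => F_ge x).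
exists x0 => x; have [Bx|nBx] := pselect (B x); first exact: x0_min.
apply: le_trans (x0_min _ Bx1) _.
have [i] : exists i, ~ `|x 0 i - y 0 i| <= M by apply/existsNP => /B_dist.
move=> /negP; rewrite -ltNge => far.
have M1 : 1 <= M by rewrite lerDr dotv_ge0.
have : sqdist y x1 <= sqdist y x.
  by apply: le_trans (le_sq x i); move: M1 far; rewrite /M; nra.
move=> /(ler_wpM2l c0) le_sq1; rewrite phi_x1 -EFinD.
by apply: le_trans (leeD2r _ (phi_ge x)); rewrite -EFinD lee_fin lerD2l.
Qed.

(* The proximal point x0 of y (minimiser of phi + c |. - y|^2) yields an affine
   minorant with slope 2c(y - x0); c is large enough that it passes above s at y. *)
Lemma affine_minorant {y s} : (s%:E < phi y)%E ->
  exists z c0, (forall x, ((dotv x z - c0)%:E <= phi x)%E) /\ s < dotv y z - c0.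
Proof.
move=> lt_s.
have [s' lt_ss' lt_s'] : exists2 s', s < s' & (s'%:E < phi y)%E.
  move: lt_s; case: (phi y) => [r| |] //=; rewrite ?lte_fin => lt_sr.
    by exists ((s + r) / 2); rewrite ?lte_fin; lra.
  by exists (s + 1); [lra | exact: ltry].
have [V nV ltV] := phi_lsc y s' lt_s'.
have [e e0 eV] := nbhs_rV_coord nV.
pose c := `|s' - r1| / e ^+ 2.
have e20 : 0 < e ^+ 2 by rewrite exprn_gt0.
have c0 : 0 <= c by rewrite divr_ge0 // ltW.
have ce : s' - r1 <= c * e ^+ 2 by rewrite divfK ?gt_eqF ?ler_norm.
have F_ge := penalized_ge e0 c0 ce (fun x near_x => ltV _ (eV _ near_x)).
have [x0 x0_min] := penalized_attains_min y c c0.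
have [f0 phix0] : exists f0, phi x0 = f0%:E.
  move: (x0_min x1) (phi_ge x0); rewrite phi_x1.
  by case: (phi x0) => [f0| |] // _ _; exists f0.
have sub := penalized_min_subgradient c0 phix0 x0_min.
exists ((2 * c) *: (y - x0)), (2 * c * dotv x0 (y - x0) - f0); split => [x|].
  by apply: le_trans (sub x); rewrite lee_fin dotvZr dotvBl; lra.
move: (F_ge x0); rewrite phix0 -EFinD lee_fin dotvZr.
have : 0 <= c * sqdist y x0 by rewrite mulr_ge0 ?dotv_ge0.
rewrite /sqdist -opprB dotvNl dotvNr opprK dotvBl; nra.
Qed.

End affine_minorant.

Section epigraph.
Context {R : realType} {m : nat}.
Variable phi : 'rV[R]_m -> \bar R.
Hypothesis phiF : inF phi.
Implicit Types (x y : 'rV[R]_m) (t s : R).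

Lemma phiK_epi : phiK (epi phi) = phi.
Proof.
have [_ _ _ phi_ge1 _] := phiF; apply/funext => x; rewrite /phiK /epi /=.
case E: (phi x) (phi_ge1 x) => [r| |] // _.
  apply/eqP; rewrite eq_le; apply/andP; split.
    by apply: ereal_inf_lbound; exists r => /=.
  by apply: le_ereal_inf_tmp => _ [t /= ? <-].
rewrite (_ : [set _%:E | _ in _] = set0) ?ereal_inf0 //.
by apply/seteqP; split => // e [t /=]; rewrite leNgt ltey.
Qed.

(* Starting from an affine minorant t >= <x,z> - c0 separating (y,s), the
   Legendre bounds -1 <= L phi z <= 0 allow tilting it, through the constraint
   t >= 1, into a constraint w of the form <w,(x,t)> >= 1. *)
Lemma epi_separation y s : ~ epi phi (y, s) ->
  exists2 w, Tpol (epi phi) w & ip w (y, s) < 1.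
Proof.
have [lsc cvx phi0 phi_ge1 leg] := phiF.
rewrite /epi /= => /negP; rewrite -ltNge => lt_s.
have [z [c0 [minor lt_sz]]] := affine_minorant lsc cvx phi0 phi_ge1 lt_s.
have Lz_le : (legendre phi z <= c0%:E)%E.
  apply: ge_ereal_sup => _ [x _ <-]; have := minor x.
  case: (phi x) => [r| |] //= le_r; first by rewrite -EFinB lee_fin; rewrite lee_fin in le_r; lra.
  by rewrite addeNy leNye.
have [lo up] := leg z (le_lt_trans Lz_le (ltry _)).
case E: (legendre phi z) lo up Lz_le => [a'| |] // lo up le_c0.
rewrite !lee_fin in lo up le_c0.
have sup_le x r : phi x = r%:E -> dotv x z - r <= a'.
  by move=> phix; rewrite -lee_fin -E EFinB -phix; apply: ereal_sup_ubound; exists x.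
pose a := - a'; pose den := a + dotv y z - s.
have den0 : 0 < den by rewrite /den /a; lra.
pose k := `|s| / den; pose D := 1 + k * a.
have k0 : 0 <= k by rewrite divr_ge0 // ltW.
have kden : k * den = `|s| by rewrite divfK // gt_eqF.
have a0 : 0 <= a by rewrite oppr_ge0.
have D0 : 0 < D by rewrite /D; have := mulr_ge0 k0 a0; lra.
exists ((- k / D) *: z, (k + 1) / D).
  move=> [x t] /= le_t; rewrite /ip /= dotvZr.
  have -> : - k / D * dotv x z + t * ((k + 1) / D) = (t * (k + 1) - k * dotv x z) / D.
    by field; rewrite gt_eqF.
  rewrite ler_pdivlMr // mul1r.
  case E': (phi x) (phi_ge1 x) le_t => [r| |] //; rewrite !lee_fin => r1 rt.
  have := sup_le x r E'; rewrite /D /a => h.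
  have : k * (- a') <= k * (t - dotv x z) by rewrite ler_wpM2l //; lra.
  nra.
rewrite /ip /= dotvZl dotvC.
have -> : - k / D * dotv y z + (k + 1) / D * s = (s * (k + 1) - k * dotv y z) / D.
  by field; rewrite gt_eqF.
rewrite ltr_pdivrMr // mul1r; move: kden; rewrite /den /D /a.
by have := ler_norm s; nra.
Qed.

Lemma epi_inS : inS (epi phi).
Proof.
have [_ _ phi0 phi_ge1 _] := phiF.
have epi_e_n : epi phi (e_n R m) by rewrite /epi /= phi0.
have snd_ge1 x t : epi phi (x, t) -> 1 <= t.
  by move=> le_t; rewrite -lee_fin (le_trans (phi_ge1 x)).
split => //.
- exists (Tpol (epi phi)); rewrite predeqE => p; split.
    by move=> ep w Tw; rewrite ipC; exact: Tw.
  case: p => y s Tys; apply: contra_notP (@id _) => /epi_separation [w Tw].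
  by rewrite ltNge Tys.
- by move=> epi0; move: epi_e_n; rewrite epi0.
- move=> epiT; have : epi phi (0, 0) by rewrite epiT.
  by move/snd_ge1; rewrite ler10.
- move=> [x t] /snd_ge1 t1 neq; rewrite ltr_sqrt_ip_e_n /ip /=.
  have [x0E|x0] := eqVneq x 0.
    have : t != 1 by apply/eqP => t1E; apply: neq; rewrite x0E t1E.
    by rewrite x0E dotv0l add0r neq_lt ltNge t1 /= => t_gt1; nra.
  by have := dotv_ge0 x; rewrite le_eqVlt eq_sym dotv_eq0 (negbTE x0) /=; nra.
Qed.

End epigraph.

Theorem proposition5p3 (R : realType) (m : nat) :
  (forall K : set (pt R m), inS K ->
     [/\ (forall x, (0 < phiK K x)%E),
         epi (phiK K) = K &
         Tpol K = epi (Ttilde (phiK K))]) /\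
  set_bij (@inS R m) (@inF R m) (@phiK R m).
Proof.
have polar K : inS K -> exists L, [/\ K = Tpol L, Tpol L (e_n R m)
    & forall x t, Tpol L (x, t) -> 1 <= t].
  move=> [[L ->] _ _ Ke closest]; exists L; split => // x t.
  by apply: Tpol_snd_ge1 => // p Kp /(closest p Kp); rewrite ltr_sqrt_ip_e_n.
split=> [K /polar [L [-> Ke Kge1]]|].
  by split; [exact: phiK_gt0 | exact: epi_phiK | exact: Tpol_phiK].
split.
- move=> K /polar [L [-> Ke Kge1]]; split.
  + exact: phiK_lsc.
  + exact: phiK_convex.
  + exact: phiK0.
  + exact: phiK_ge1.
  + exact: legendre_phiK_bounds.
- move=> K1 K2; rewrite !inE => /polar [L1 [-> Ke1 K1ge1]].
  move=> /polar [L2 [-> Ke2 K2ge1]] eq_phi.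
  by rewrite -(epi_phiK Ke1 K1ge1) -(epi_phiK Ke2 K2ge1) eq_phi.
- by move=> phi phiF; exists (epi phi); [exact: epi_inS | exact: phiK_epi].
Qed.
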